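(* Let $\mathfrak{n}$ be the real $7$-dimensional Lie algebra with basis $e_1,\dots,e_7$ whose nonzero brackets (up to antisymmetry) are $[e_1,e_2]=e_3$, $[e_1,e_3]=e_4$, $[e_1,e_4]=e_6$, $[e_1,e_5]=e_7$, $[e_1,e_6]=e_7$, $[e_2,e_3]=e_5$, $[e_2,e_4]=e_7$. Then $\mathfrak{n}$ is an Einstein nilradical.
   Context: A real nilpotent Lie algebra $\mathfrak{n}$ is called an Einstein nilradical if it admits an inner product such that the left-invariant Riemannian metric it defines on the simply connected nilpotent Lie group with Lie algebra $\mathfrak{n}$ is a nilsoliton, i.e. its Ricci operator satisfies $\mathrm{Ric}=c\,\mathrm{Id}+D$ for some $c\in\mathbb{R}$ and some derivation $D$ of $\mathfrak{n}$. Brackets of basis elements not listed are zero. *)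

From HB Require Import structures.
From mathcomp Require Import all_boot all_order all_algebra.
From mathcomp Require Import reals.
Set Implicit Arguments. Unset Strict Implicit. Unset Printing Implicit Defensive.
Import Order.TTheory GRing.Theory Num.Theory.
Local Open Scope ring_scope.

Section LieMetric.
Variables (R : realType) (n : nat).

Definition ev (k : 'I_n) : 'rV[R]_n := delta_mx 0 k.

Definition brkt (c : 'I_n -> 'I_n -> 'rV[R]_n) (x y : 'rV[R]_n) : 'rV[R]_n :=
  \sum_(i < n) \sum_(j < n) (x 0 i * y 0 j) *: c i j.

Definition is_Lie (c : 'I_n -> 'I_n -> 'rV[R]_n) : Prop :=
  (forall x, brkt c x x = 0) /\
  (forall x y z, brkt c x (brkt c y z) + brkt c y (brkt c z x)
                 + brkt c z (brkt c x y) = 0).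

Definition is_nilpotent (c : 'I_n -> 'I_n -> 'rV[R]_n) : Prop :=
  exists k : nat, forall (x : 'rV[R]_n) (xs : seq 'rV[R]_n),
    size xs = k -> foldr (brkt c) x xs = 0.

Definition ip (G : 'M[R]_n) (x y : 'rV[R]_n) : R := (x *m G *m y^T) 0 0.

Definition is_inner_product (G : 'M[R]_n) : Prop :=
  G^T = G /\ forall x : 'rV[R]_n, x != 0 -> 0 < ip G x x.

(* Levi-Civita connection of the left-invariant metric (Koszul formula):
   2 <nabla_X Y, Z> = <[X,Y],Z> - <[Y,Z],X> + <[Z,X],Y>. *)
Definition nabla (c : 'I_n -> 'I_n -> 'rV[R]_n) (G : 'M[R]_n)
    (x y : 'rV[R]_n) : 'rV[R]_n :=
  (\row_k ((ip G (brkt c x y) (ev k) - ip G (brkt c y (ev k)) x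
            + ip G (brkt c (ev k) x) y) / 2)) *m invmx G.

Definition curv c G (x y z : 'rV[R]_n) : 'rV[R]_n :=
  nabla c G x (nabla c G y z) - nabla c G y (nabla c G x z)
  - nabla c G (brkt c x y) z.

Definition ric c G (y z : 'rV[R]_n) : R :=
  \sum_(k < n) (curv c G (ev k) y z) 0 k.

(* Ricci operator: <Ric Y, Z> = ric(Y,Z) *)
Definition ricop c G (y : 'rV[R]_n) : 'rV[R]_n :=
  (\row_k ric c G y (ev k)) *m invmx G.

Definition is_derivation c (D : 'M[R]_n) : Prop :=
  forall x y, brkt c x y *m D = brkt c (x *m D) y + brkt c x (y *m D).

Definition is_nilsoliton c (G : 'M[R]_n) : Prop :=
  exists (c0 : R) (D : 'M[R]_n), is_derivation c D /\
    forall x, ricop c G x = c0 *: x + x *m D.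

Definition einstein_nilradical c : Prop :=
  is_Lie c /\ is_nilpotent c /\
  exists G : 'M[R]_n, is_inner_product G /\ is_nilsoliton c G.

End LieMetric.

(* The 7-dimensional algebra; e_1..e_7 are indices 0..6. *)
Definition e7 (R : realType) (k : nat) : 'rV[R]_7 := delta_mx 0 (@inord 6 k).

Definition n7 (R : realType) (i j : 'I_7) : 'rV[R]_7 :=
  match nat_of_ord i, nat_of_ord j with
  | 0, 1 => e7 R 2 | 1, 0 => - e7 R 2
  | 0, 2 => e7 R 3 | 2, 0 => - e7 R 3
  | 0, 3 => e7 R 5 | 3, 0 => - e7 R 5
  | 0, 4 => e7 R 6 | 4, 0 => - e7 R 6
  | 0, 5 => e7 R 6 | 5, 0 => - e7 R 6
  | 1, 2 => e7 R 4 | 2, 1 => - e7 R 4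
  | 1, 3 => e7 R 6 | 3, 1 => - e7 R 6
  | _, _ => 0
  end.

From Stdlib Require Import ZArith QArith.
From HB Require Import structures.
From mathcomp Require Import all_boot all_order all_algebra.
From mathcomp Require Import reals ssrZ ring lra zify.
Set Implicit Arguments. Unset Strict Implicit. Unset Printing Implicit Defensive.
Import Order.TTheory GRing.Theory Num.Theory.
Local Open Scope ring_scope.

(* The algebra is positively graded by the weights w = (1,2,3,4,5,5,6) of
   e_1, ..., e_7: each [e_i, e_j] lies in the span of the basis vectors of weight
   w_i + w_j.  Hence it is nilpotent and lam * diag(w) is a derivation for every
   lam.  For the rational Gram matrix [gram] below, which only couples e_5 and
   e_6, the Ricci operator of the left-invariant metric is
   -29/8 Id + 13/16 diag(w), so the metric is a nilsoliton.
   All the data are rational.  The coordinate expressions of the Koszul formula,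
   the Ricci operator, G G^-1 and the Jacobiator are written once over abstract
   operations (add, mul, opp); evaluated in Q they are checked by computation,
   and the ring morphism Q -> R transports the resulting identities to R. *)

Section BasisExpansion.
Variables (R : realType) (n : nat).

Lemma linear_basis_sum (V : lmodType R) (F : 'rV[R]_n -> V) :
  linear F -> forall x, F x = \sum_i x 0 i *: F (ev R i).
Proof.
move=> /GRing.semilinear_linear [FZ FD] x.
have F0 : F 0 = 0 by apply: (addIr (F 0)); rewrite -FD !add0r.
rewrite {1}(row_sum_delta x) (big_morph F FD F0).
by apply: eq_bigr => i _; rewrite FZ.
Qed.

Lemma linear_basis_ext (V : lmodType R) (F1 F2 : 'rV[R]_n -> V) :
  linear F1 -> linear F2 -> (forall i, F1 (ev R i) = F2 (ev R i)) -> F1 =1 F2.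
Proof.
move=> lin1 lin2 eqF x; rewrite (linear_basis_sum lin1) (linear_basis_sum lin2).
by apply: eq_bigr => i _; rewrite eqF.
Qed.

End BasisExpansion.

Section StructureConstants.
Variables (R : realType) (n : nat) (c : 'I_n -> 'I_n -> 'rV[R]_n) (G : 'M[R]_n).
Implicit Types (x y z : 'rV[R]_n) (a : R).

Lemma brkt_linl a x x' y : brkt c (a *: x + x') y = a *: brkt c x y + brkt c x' y.
Proof.
rewrite /brkt scaler_sumr -big_split; apply: eq_bigr => i _.
rewrite scaler_sumr -big_split; apply: eq_bigr => j _.
by rewrite !mxE scalerA /= -scalerDl; congr (_ *: _); ring.
Qed.

Lemma brkt_linr a x y y' : brkt c x (a *: y + y') = a *: brkt c x y + brkt c x y'.
Proof.
rewrite /brkt scaler_sumr -big_split; apply: eq_bigr => i _.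
rewrite scaler_sumr -big_split; apply: eq_bigr => j _.
by rewrite !mxE scalerA /= -scalerDl; congr (_ *: _); ring.
Qed.

Lemma brkt_ev i j : brkt c (ev R i) (ev R j) = c i j.
Proof.
rewrite /brkt (bigD1 i) //= [X in _ + X]big1 => [|k /negbTE ki]; last first.
  by apply: big1 => l _; rewrite /ev mxE ki andbF mul0r scale0r.
rewrite addr0 (bigD1 j) //= [X in _ + X]big1 => [|k /negbTE kj]; last first.
  by rewrite /ev !mxE kj andbF mulr0 scale0r.
by rewrite /ev !mxE !eqxx mulr1 scale1r addr0.
Qed.

Lemma brkt_alternating :
  (forall i j, c i j = - c j i) -> forall x, brkt c x x = 0.
Proof.
move=> anti x.
have opp : brkt c x x = - brkt c x x.
  rewrite {1}/brkt exchange_big /brkt -sumrN; apply: eq_bigr => j _.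
  by rewrite -sumrN; apply: eq_bigr => i _; rewrite anti scalerN mulrC.
by apply/rowP => k; have := congr1 (fun v : 'rV[R]_n => v 0 k) opp; rewrite !mxE; lra.
Qed.

Definition jacobiator x y z :=
  brkt c x (brkt c y z) + brkt c y (brkt c z x) + brkt c z (brkt c x y).

Lemma jacobiator_linl a x x' y z :
  jacobiator (a *: x + x') y z = a *: jacobiator x y z + jacobiator x' y z.
Proof.
rewrite /jacobiator !(brkt_linl, brkt_linr).
by apply/rowP => k; rewrite !mxE; ring.
Qed.

Lemma jacobiatorC x y z : jacobiator x y z = jacobiator y z x.
Proof. by rewrite /jacobiator -addrA addrC. Qed.

Lemma is_Lie_basis :
  (forall i j, c i j = - c j i) ->
  (forall i j k, jacobiator (ev R i) (ev R j) (ev R k) = 0) -> is_Lie c.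
Proof.
move=> anti jac; split=> [|x y z]; first exact: brkt_alternating.
have jac_lin y' z' : linear (fun x' => jacobiator x' y' z').
  by move=> a u v; exact: jacobiator_linl.
have zero_lin : linear (fun _ : 'rV[R]_n => 0 : 'rV[R]_n).
  by move=> a u v; rewrite scaler0 addr0.
suff : jacobiator x y z = 0 by [].
apply: (linear_basis_ext (jac_lin y z) zero_lin) => i.
rewrite jacobiatorC; apply: (linear_basis_ext (jac_lin z _) zero_lin) => j.
rewrite jacobiatorC; apply: (linear_basis_ext (jac_lin _ _) zero_lin) => k.
exact: jac.
Qed.

Lemma brktZl a x y : brkt c (a *: x) y = a *: brkt c x y.
Proof.
rewrite /brkt scaler_sumr; apply: eq_bigr => i _; rewrite scaler_sumr.
by apply: eq_bigr => j _; rewrite !mxE scalerA mulrA.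
Qed.

Lemma brktZr a x y : brkt c x (a *: y) = a *: brkt c x y.
Proof.
rewrite /brkt scaler_sumr; apply: eq_bigr => i _; rewrite scaler_sumr.
by apply: eq_bigr => j _; rewrite !mxE scalerA; congr (_ *: _); ring.
Qed.

Definition graded (w : 'I_n -> nat) :=
  forall i j l, c i j 0 l != 0 -> w l = (w i + w j)%N.

Lemma graded_derivation (w : 'I_n -> nat) (lam : R) :
  graded w -> is_derivation c (diag_mx (\row_i (lam * (w i)%:R))).
Proof.
move=> gr; set D := diag_mx _.
have evD k : ev R k *m D = (lam * (w k)%:R) *: ev R k.
  apply/rowP => l; rewrite mul_mx_diag !mxE.
  by rewrite eqxx /=; case: eqP => [-> | _]; rewrite ?mulr1 ?mulr0 ?mul0r ?mul1r.
have lin_l y : linear (fun x : 'rV[R]_n => brkt c x y *m D).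
  by move=> a x x'; rewrite /= brkt_linl mulmxDl scalemxAl.
have lin_r y : linear (fun x : 'rV[R]_n => brkt c (x *m D) y + brkt c x (y *m D)).
  move=> a x x'; rewrite /= mulmxDl -scalemxAl !brkt_linl.
  by apply/rowP => k; rewrite !mxE; ring.
move=> x y; apply: (linear_basis_ext (lin_l y) (lin_r y) _ x) => i {x}.
have lin_l' : linear (fun y => brkt c (ev R i) y *m D).
  by move=> a u u'; rewrite /= brkt_linr mulmxDl scalemxAl.
have lin_r' : linear (fun y => brkt c (ev R i *m D) y + brkt c (ev R i) (y *m D)).
  move=> a u u'; rewrite /= mulmxDl -scalemxAl !brkt_linr.
  by apply/rowP => k; rewrite !mxE; ring.
apply: (linear_basis_ext lin_l' lin_r' _ y) => j {y}.
rewrite !evD brktZl brktZr !brkt_ev; apply/rowP => l; rewrite mul_mx_diag !mxE.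
have [-> | /gr ->] := eqVneq (c i j 0 l) 0; first by rewrite !mulr0 mul0r addr0.
by rewrite natrD; ring.
Qed.

Lemma graded_nilpotent (w : 'I_n -> nat) :
  graded w -> (forall i, (0 < w i)%N) -> is_nilpotent c.
Proof.
move=> gr pos; exists (\max_i w i).+1 => x xs size_xs.
have vanish l : (w l < size xs)%N -> foldr (brkt c) x xs 0 l = 0.
  elim: xs {size_xs} l => [|y xs IH] l //= lt_l.
  rewrite /brkt summxE big1 // => i _; rewrite summxE big1 // => j _; rewrite mxE.
  have [lt_j | ge_j] := ltnP (w j) (size xs); first by rewrite IH // mulr0 mul0r.
  have [-> | /gr wl] := eqVneq (c i j 0 l) 0; first by rewrite mulr0.
  by have := pos i; move: lt_l; rewrite wl; lia.
by apply/rowP => l; rewrite mxE vanish // size_xs ltnS (leq_bigmax l).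
Qed.

Lemma ip_linl a x x' z : ip G (a *: x + x') z = a * ip G x z + ip G x' z.
Proof. by rewrite /ip !mulmxDl -!scalemxAl !mxE. Qed.

Lemma ip_linr a z y y' : ip G z (a *: y + y') = a * ip G z y + ip G z y'.
Proof. by rewrite /ip linearD linearZ /= mulmxDr -scalemxAr !mxE. Qed.

Lemma ip_ev u k : ip G u (ev R k) = \sum_m u 0 m * G m k.
Proof. by rewrite /ip /ev trmx_delta -colE !mxE. Qed.

Lemma nabla_linl a x x' y :
  nabla c G (a *: x + x') y = a *: nabla c G x y + nabla c G x' y.
Proof.
rewrite /nabla scalemxAl -mulmxDl; congr (_ *m _); apply/rowP => k; rewrite !mxE.
by rewrite brkt_linl brkt_linr !ip_linl ip_linr; ring.
Qed.

Lemma nabla_linr a x y y' :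
  nabla c G x (a *: y + y') = a *: nabla c G x y + nabla c G x y'.
Proof.
rewrite /nabla scalemxAl -mulmxDl; congr (_ *m _); apply/rowP => k; rewrite !mxE.
by rewrite brkt_linr brkt_linl !ip_linl ip_linr; ring.
Qed.

Lemma curv_linm a x y y' z :
  curv c G x (a *: y + y') z = a *: curv c G x y z + curv c G x y' z.
Proof.
rewrite /curv !nabla_linl nabla_linr brkt_linr nabla_linl.
by apply/rowP => k; rewrite !mxE; ring.
Qed.

Lemma ricop_lin a y y' : ricop c G (a *: y + y') = a *: ricop c G y + ricop c G y'.
Proof.
rewrite /ricop scalemxAl -mulmxDl; congr (_ *m _); apply/rowP => k; rewrite !mxE.
rewrite /ric mulr_sumr -big_split; apply: eq_bigr => j _.
by rewrite curv_linm !mxE.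
Qed.

Lemma is_nilsoliton_basis (c0 : R) (D : 'M[R]_n) :
  is_derivation c D -> (forall i, ricop c G (ev R i) = c0 *: ev R i + ev R i *m D) ->
  is_nilsoliton c G.
Proof.
move=> der ric_ev; exists c0, D; split=> // x.
have lin : linear (fun x : 'rV[R]_n => c0 *: x + x *m D).
  move=> a u v; rewrite /= mulmxDl -scalemxAl.
  by apply/rowP => k; rewrite !mxE; ring.
exact: (linear_basis_ext (fun a u v => ricop_lin a u v) lin).
Qed.

End StructureConstants.

Section CoordinateFormulas.
Local Open Scope nat_scope.
Variables (T : Type) (add mul : T -> T -> T) (opp : T -> T).

Definition sum7 (f : nat -> T) : T :=
  add (f 0) (add (f 1) (add (f 2) (add (f 3) (add (f 4) (add (f 5) (f 6)))))).

Definition sub x y := add x (opp y).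

Definition koszul_coef (cv : nat -> nat -> nat -> T) (g gi : nat -> nat -> T) (h : T)
    (a b l : nat) : T :=
  sum7 (fun k => mul (mul (add (sub (sum7 (fun m => mul (cv a b m) (g m k)))
                                    (sum7 (fun m => mul (cv b k m) (g m a))))
                               (sum7 (fun m => mul (cv k a m) (g m b)))) h) (gi k l)).

Definition curv_coef (cv N : nat -> nat -> nat -> T) (j i k l : nat) : T :=
  sub (sub (sum7 (fun m => mul (N i k m) (N j m l)))
           (sum7 (fun m => mul (N j k m) (N i m l))))
      (sum7 (fun m => mul (cv j i m) (N m k l))).

Definition ricop_coef (cv N : nat -> nat -> nat -> T) (gi : nat -> nat -> T) (i l : nat) : T :=
  sum7 (fun k => mul (sum7 (fun j => curv_coef cv N j i k j)) (gi k l)).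

Definition matmul_coef (A B : nat -> nat -> T) (i j : nat) : T :=
  sum7 (fun m => mul (A i m) (B m j)).

Definition jacobi_coef (cv : nat -> nat -> nat -> T) (a b d l : nat) : T :=
  let J a b d := sum7 (fun m => mul (cv b d m) (cv a m l)) in
  add (add (J a b d) (J b d a)) (J d a b).

Lemma eq_sum7 (f g : nat -> T) : (forall k, f k = g k) -> sum7 f = sum7 g.
Proof. by move=> fg; rewrite /sum7 !fg. Qed.

End CoordinateFormulas.

Section Transfer.
Variables (T1 T2 : Type) (add1 mul1 : T1 -> T1 -> T1) (opp1 : T1 -> T1).
Variables (add2 mul2 : T2 -> T2 -> T2) (opp2 : T2 -> T2) (phi : T1 -> T2).
Hypotheses (phiD : forall x y, phi (add1 x y) = add2 (phi x) (phi y))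
           (phiM : forall x y, phi (mul1 x y) = mul2 (phi x) (phi y))
           (phiN : forall x, phi (opp1 x) = opp2 (phi x)).

Definition transported2 (f1 : nat -> nat -> T1) f2 := forall a b, f2 a b = phi (f1 a b).
Definition transported3 (f1 : nat -> nat -> nat -> T1) f2 :=
  forall a b l, f2 a b l = phi (f1 a b l).

Lemma sum7_morph f : phi (sum7 add1 f) = sum7 add2 (fun k => phi (f k)).
Proof. by rewrite /sum7 !phiD. Qed.

Lemma sub_morph x y : phi (sub add1 opp1 x y) = sub add2 opp2 (phi x) (phi y).
Proof. by rewrite /sub phiD phiN. Qed.

Lemma koszul_coef_morph cv1 cv2 g1 g2 gi1 gi2 h a b l :
  transported3 cv1 cv2 -> transported2 g1 g2 -> transported2 gi1 gi2 ->
  koszul_coef add2 mul2 opp2 cv2 g2 gi2 (phi h) a b l =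
  phi (koszul_coef add1 mul1 opp1 cv1 g1 gi1 h a b l).
Proof.
move=> cvE gE giE; rewrite sum7_morph; apply: eq_sum7 => k.
rewrite !phiM phiD sub_morph !sum7_morph giE.
by congr (mul2 (mul2 (add2 (sub _ _ _ _) _) _) _); apply: eq_sum7 => m; rewrite phiM cvE gE.
Qed.

Lemma ricop_coef_morph cv1 cv2 N1 N2 gi1 gi2 i l :
  transported3 cv1 cv2 -> transported3 N1 N2 -> transported2 gi1 gi2 ->
  ricop_coef add2 mul2 opp2 cv2 N2 gi2 i l = phi (ricop_coef add1 mul1 opp1 cv1 N1 gi1 i l).
Proof.
move=> cvE NE giE; rewrite sum7_morph; apply: eq_sum7 => k.
rewrite phiM giE sum7_morph; congr (mul2 _ _); apply: eq_sum7 => j.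
rewrite /curv_coef !sub_morph !sum7_morph.
by congr (sub _ _ (sub _ _ _ _) _); apply: eq_sum7 => m; rewrite phiM ?cvE !NE.
Qed.

Lemma matmul_coef_morph A1 A2 B1 B2 i j :
  transported2 A1 A2 -> transported2 B1 B2 ->
  matmul_coef add2 mul2 A2 B2 i j = phi (matmul_coef add1 mul1 A1 B1 i j).
Proof. by move=> AE BE; rewrite sum7_morph; apply: eq_sum7 => m; rewrite phiM AE BE. Qed.

Lemma jacobi_coef_morph cv1 cv2 a b d l :
  transported3 cv1 cv2 ->
  jacobi_coef add2 mul2 cv2 a b d l = phi (jacobi_coef add1 mul1 cv1 a b d l).
Proof. by move=> cvE; rewrite /jacobi_coef /sum7 !phiD !phiM !cvE. Qed.

End Transfer.

Section Coordinates7.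
Variables (R : realType) (c : 'I_7 -> 'I_7 -> 'rV[R]_7) (G : 'M[R]_7).

Definition ei (k : nat) : 'rV[R]_7 := ev R (inord k).
Definition struct_coef (a b m : nat) : R := c (inord a) (inord b) 0 (inord m).
Definition mx_coef (M : 'M[R]_7) (a b : nat) : R := M (inord a) (inord b).
Definition nabla_coef (a b l : nat) : R := nabla c G (ei a) (ei b) 0 (inord l).

Lemma sum_ord7 (F : 'I_7 -> R) : \sum_i F i = sum7 +%R (fun k => F (inord k)).
Proof.
rewrite (eq_bigr (fun i : 'I_7 => F (inord (val i)))) => [|i _]; last by rewrite inord_val.
by rewrite -(big_mkord xpredT (fun k => F (inord k))) !big_nat_recl // big_geq // addr0.
Qed.

Lemma entry_sumZ (a : 'I_7 -> R) (v : 'I_7 -> 'rV[R]_7) l :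
  (\sum_m a m *: v m) 0 l = \sum_m a m * v m 0 l.
Proof. by rewrite summxE; apply: eq_bigr => m _; rewrite mxE. Qed.

Lemma nabla_coefE a b l :
  nabla_coef a b l = koszul_coef +%R *%R -%R struct_coef (mx_coef G) (mx_coef (invmx G)) 2^-1 a b l.
Proof.
rewrite /nabla_coef /nabla mxE sum_ord7; apply: eq_sum7 => k.
by rewrite mxE !brkt_ev !ip_ev !sum_ord7.
Qed.

Lemma curv_coefE j i k l :
  curv c G (ei j) (ei i) (ei k) 0 (inord l) = curv_coef +%R *%R -%R struct_coef nabla_coef j i k l.
Proof.
have nabla_sumr x y : nabla c G x y = \sum_m y 0 m *: nabla c G x (ev R m).
  exact: (linear_basis_sum (fun a u v => nabla_linr c G a x u v)).
have nabla_suml x y : nabla c G x y = \sum_m x 0 m *: nabla c G (ev R m) y.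
  exact: (linear_basis_sum (fun a u v => nabla_linl c G a u v y)).
have entryB (u v : 'rV[R]_7) m : (u - v) 0 m = u 0 m - v 0 m by rewrite !mxE.
rewrite /curv brkt_ev (nabla_sumr (ei j) (nabla c G (ei i) (ei k))).
rewrite (nabla_sumr (ei i) (nabla c G (ei j) (ei k))) (nabla_suml (c _ _) (ei k)).
by rewrite !entryB !entry_sumZ !sum_ord7.
Qed.

Lemma ricop_coefE i l :
  ricop c G (ei i) 0 (inord l) =
  ricop_coef +%R *%R -%R struct_coef nabla_coef (mx_coef (invmx G)) i l.
Proof.
rewrite /ricop mxE sum_ord7; apply: eq_sum7 => k.
by rewrite mxE /ric sum_ord7; congr (_ * _); apply: eq_sum7 => j; rewrite curv_coefE.
Qed.

End Coordinates7.

Definition qadd (x y : Q) : Q := Qred (Qplus x y).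
Definition qmul (x y : Q) : Q := Qred (Qmult x y).

Section RationalsToReals.
Variable R : realType.

Definition realZ (z : Z) : R := (int_of_Z z)%:~R.
Definition realQ (q : Q) : R := realZ (Qnum q) / realZ (Zpos (Qden q)).

Lemma realZD a b : realZ (Z.add a b) = realZ a + realZ b.
Proof. by rewrite /realZ (rmorphD int_of_Z a b) intrD. Qed.

Lemma realZM a b : realZ (Z.mul a b) = realZ a * realZ b.
Proof. by rewrite /realZ (rmorphM int_of_Z a b) intrM. Qed.

Lemma realZN a : realZ (Z.opp a) = - realZ a.
Proof. by rewrite /realZ (rmorphN int_of_Z a) mulrNz. Qed.

Lemma realZ_pos p : realZ (Zpos p) != 0.
Proof.
rewrite gt_eqF // /realZ /= ltr0z ltz_nat; apply/ssrnat.ltP; exact: Pos2Nat.is_pos.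
Qed.

Lemma realQ_Z z : realQ (inject_Z z) = realZ z.
Proof. by rewrite /realQ /= /realZ /= mulr1z divr1. Qed.

Lemma realQ_eq x y : Qeq_bool x y -> realQ x = realQ y.
Proof.
case: x y => [xn xd] [yn yd] /Qeq_bool_eq; rewrite /Qeq /realQ /= => /(congr1 realZ).
rewrite !realZM => e; apply/eqP; rewrite eqr_div ?realZ_pos //.
by rewrite e.
Qed.

Lemma realQ_add x y : realQ (qadd x y) = realQ x + realQ y.
Proof.
rewrite /qadd (realQ_eq (Qeq_eq_bool _ _ (Qred_correct _))).
case: x y => [xn xd] [yn yd]; rewrite /realQ /Qplus /=.
rewrite (_ : Zpos (xd * yd) = Z.mul (Zpos xd) (Zpos yd)) // realZD !realZM.
by field; rewrite !realZ_pos.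
Qed.

Lemma realQ_mul x y : realQ (qmul x y) = realQ x * realQ y.
Proof.
rewrite /qmul (realQ_eq (Qeq_eq_bool _ _ (Qred_correct _))).
case: x y => [xn xd] [yn yd]; rewrite /realQ /Qmult /=.
rewrite (_ : Zpos (xd * yd) = Z.mul (Zpos xd) (Zpos yd)) // !realZM.
by field; rewrite !realZ_pos.
Qed.

Lemma realZ_nat n : realZ (Z.of_nat n) = n%:R.
Proof. by rewrite /realZ -[in LHS](natn n) !rmorph_nat. Qed.

Lemma realQ_opp x : realQ (Qopp x) = - realQ x.
Proof. by case: x => [xn xd]; rewrite /realQ /= realZN mulNr. Qed.

End RationalsToReals.

Section RationalData.
Local Open Scope nat_scope.

(* Indices beyond 6 are folded onto 0, as [inord] does, so that the tables below
   agree with [struct_coef] and [mx_coef] at every natural index. *)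
Definition cap (k : nat) : nat := if k < 7 then k else 0.

Definition n7Z (a b l : nat) : Z :=
  match cap a, cap b, cap l with
  | 0, 1, 2 | 0, 2, 3 | 0, 3, 5 | 0, 4, 6 | 0, 5, 6 | 1, 2, 4 | 1, 3, 6 => Zpos xH
  | 1, 0, 2 | 2, 0, 3 | 3, 0, 5 | 4, 0, 6 | 5, 0, 6 | 2, 1, 4 | 3, 1, 6 => Zneg xH
  | _, _, _ => Z0
  end.

Definition gramQ (a b : nat) : Q :=
  match cap a, cap b with
  | 0, 0 | 1, 1 => 1
  | 2, 2 => 9 # 8
  | 3, 3 | 4, 4 => 63 # 32
  | 4, 5 | 5, 4 => 63 # 64
  | 5, 5 => 693 # 256
  | 6, 6 => 567 # 256
  | _, _ => 0
  end.

Definition gram_invQ (a b : nat) : Q :=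
  match cap a, cap b with
  | 0, 0 | 1, 1 => 1
  | 2, 2 => 8 # 9
  | 3, 3 => 32 # 63
  | 4, 4 => 352 # 567
  | 4, 5 | 5, 4 => -128 # 567
  | 5, 5 | 6, 6 => 256 # 567
  | _, _ => 0
  end.

Definition weight (k : nat) : nat := nth 0 [:: 1; 2; 3; 4; 5; 5; 6] k.

Definition n7Q a b l : Q := inject_Z (n7Z a b l).
Definition deltaQ (i l : nat) : Q := if cap i == cap l then 1 # 1 else 0 # 1.

Definition all7 (P : nat -> bool) := all P (iota 0 7).

(* The connection coefficients are computed once, when the definition is
   elaborated, and certified by [connection_check]; looking them up keeps the
   Ricci computation of [ricop_check] cheap. *)
Definition connection_table : seq (seq (seq Q)) := Eval vm_compute in
  [seq [seq [seq koszul_coef qadd qmul Qopp n7Q gramQ gram_invQ (1 # 2) a b l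
  | l <- iota 0 7] | b <- iota 0 7] | a <- iota 0 7].

Definition connectionQ (a b l : nat) : Q :=
  nth (0 # 1) (nth [::] (nth [::] connection_table (cap a)) (cap b)) (cap l).

Lemma connection_check : all7 (fun a => all7 (fun b => all7 (fun l =>
  Qeq_bool (connectionQ a b l) (koszul_coef qadd qmul Qopp n7Q gramQ gram_invQ (1 # 2) a b l)))).
Proof. by vm_compute. Qed.

Lemma ricop_check : all7 (fun i => all7 (fun l =>
  Qeq_bool (ricop_coef qadd qmul Qopp n7Q connectionQ gram_invQ i l)
           (qmul (qadd (-29 # 8) (qmul (13 # 16) (inject_Z (Z.of_nat (weight i))))) (deltaQ i l)))).
Proof. by vm_compute. Qed.

Lemma gram_inv_check : all7 (fun i => all7 (fun j =>
  Qeq_bool (matmul_coef qadd qmul gramQ gram_invQ i j) (deltaQ i j))).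
Proof. by vm_compute. Qed.

Lemma gram_sym_check : all7 (fun a => all7 (fun b => Qeq_bool (gramQ a b) (gramQ b a))).
Proof. by vm_compute. Qed.

Lemma jacobi_check : all7 (fun a => all7 (fun b => all7 (fun d => all7 (fun l =>
  Qeq_bool (jacobi_coef qadd qmul n7Q a b d l) 0)))).
Proof. by vm_compute. Qed.

Lemma n7Z_anti_check : all7 (fun a => all7 (fun b => all7 (fun l =>
  Z.eqb (n7Z a b l) (Z.opp (n7Z b a l))))).
Proof. by vm_compute. Qed.

Lemma n7Z_graded_check : all7 (fun a => all7 (fun b => all7 (fun l =>
  Z.eqb (n7Z a b l) Z0 || (weight l == weight a + weight b)))).
Proof. by vm_compute. Qed.

End RationalData.

Lemma val_inord7 k : nat_of_ord (@inord 6 k) = cap k.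
Proof. by rewrite /cap; case: ifP => lt7; [rewrite inordK | rewrite /inord /insubd insubF]. Qed.

Lemma capK k : cap (cap k) = cap k.
Proof. by rewrite /cap; case: (ltnP k 7) => k7 //=; rewrite k7. Qed.

Lemma cap_lt7 k : (cap k < 7)%N.
Proof. by rewrite /cap; case: ifP. Qed.

Lemma all7P (P : nat -> bool) : all7 P -> forall k, (k < 7)%N -> P k.
Proof. by move=> /allP allP k k7; apply: allP; rewrite mem_iota. Qed.

Section SevenDimensional.
Variable R : realType.
Notation n7 := (@n7 R).

Lemma n7E (i j k : 'I_7) : n7 i j 0 k = realZ R (n7Z i j k).
Proof.
case: i => [[|[|[|[|[|[|[|i]]]]]]] Hi] //; case: j => [[|[|[|[|[|[|[|j]]]]]]] Hj] //;
case: k => [[|[|[|[|[|[|[|k]]]]]]] Hk] //;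
by rewrite /n7 /= /e7 ?mxE /= -?val_eqE /= ?val_inord7 /realZ /= ?NegzE ?intrN ?mulr0z ?mulr1z ?oppr0.
Qed.

Lemma n7_struct_coef : transported3 (realQ R) n7Q (struct_coef n7).
Proof. by move=> a b m; rewrite /struct_coef n7E !val_inord7 realQ_Z /n7Z !capK. Qed.

Lemma n7_antisymmetric i j : n7 i j = - n7 j i.
Proof.
apply/rowP => m; rewrite mxE !n7E -realZN; congr realZ; apply/Z.eqb_eq.
exact: (all7P (all7P (all7P n7Z_anti_check (ltn_ord i)) (ltn_ord j)) (ltn_ord m)).
Qed.

Lemma n7_graded : graded n7 (fun i => weight i).
Proof.
move=> i j l; rewrite n7E.
have := all7P (all7P (all7P n7Z_graded_check (ltn_ord i)) (ltn_ord j)) (ltn_ord l).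
by case/orP => [/Z.eqb_eq -> | /eqP //]; rewrite /realZ mulr0z eqxx.
Qed.

Lemma n7_nilpotent : is_nilpotent n7.
Proof.
by apply: (graded_nilpotent n7_graded); case=> [[|[|[|[|[|[|[|]]]]]]]].
Qed.

Lemma n7_jacobi_ev a b d : (a < 7)%N -> (b < 7)%N -> (d < 7)%N ->
  jacobiator n7 (ei R a) (ei R b) (ei R d) = 0.
Proof.
move=> a7 b7 d7; apply/rowP => l; rewrite -[l]inord_val mxE.
have brkt_sum x y : brkt n7 x y = \sum_m y 0 m *: brkt n7 x (ev R m).
  exact: (linear_basis_sum (fun s u v => brkt_linr n7 s x u v)).
transitivity (jacobi_coef +%R *%R (struct_coef n7) a b d l).
  rewrite /jacobiator !brkt_ev !(brkt_sum (ei R _)) !mxE !entry_sumZ !sum_ord7.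
  by congr (_ + _ + _); apply: eq_sum7 => m; rewrite brkt_ev.
rewrite (jacobi_coef_morph (realQ_add R) (realQ_mul R) _ _ _ _ n7_struct_coef).
rewrite (realQ_eq R (all7P (all7P (all7P (all7P jacobi_check a7) b7) d7) (ltn_ord l))).
by rewrite mxE /realQ /realZ /= ?mulr0z mul0r.
Qed.

Lemma n7_is_Lie : is_Lie n7.
Proof.
apply: (is_Lie_basis n7_antisymmetric) => i j k.
by have := n7_jacobi_ev (ltn_ord i) (ltn_ord j) (ltn_ord k); rewrite /ei !inord_val.
Qed.

Lemma cap_ord (i : 'I_7) : cap i = i.
Proof. by rewrite /cap ltn_ord. Qed.

Lemma realQ_delta (i j : 'I_7) : realQ R (deltaQ i j) = (i == j)%:R.
Proof.
rewrite /deltaQ !cap_ord; case: eqP => [/val_inj -> | ne]; last first.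
  by rewrite /realQ /realZ /= ?mulr0z mul0r; case: eqP => // ij; case: ne; rewrite ij.
by rewrite eqxx /realQ /realZ /= ?mulr1z divr1.
Qed.

Definition gram : 'M[R]_7 := \matrix_(i, j) realQ R (gramQ i j).
Definition gram_inv : 'M[R]_7 := \matrix_(i, j) realQ R (gram_invQ i j).

Lemma gram_coef : transported2 (realQ R) gramQ (mx_coef gram).
Proof. by move=> a b; rewrite /mx_coef mxE !val_inord7 /gramQ !capK. Qed.

Lemma gram_inv_coef : transported2 (realQ R) gram_invQ (mx_coef gram_inv).
Proof. by move=> a b; rewrite /mx_coef mxE !val_inord7 /gram_invQ !capK. Qed.

Lemma invmx_gram : invmx gram = gram_inv.
Proof.
have gram_mulV : gram *m gram_inv = 1%:M.
  apply/matrixP => i j; rewrite !mxE sum_ord7 -realQ_delta.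
  rewrite -(realQ_eq R (all7P (all7P gram_inv_check (ltn_ord i)) (ltn_ord j))).
  rewrite -(matmul_coef_morph (realQ_add R) (realQ_mul R) _ _ gram_coef gram_inv_coef).
  by apply: eq_sum7 => k; rewrite /mx_coef !inord_val.
have [gram_unit _] := mulmx1_unit gram_mulV.
by rewrite -[invmx gram]mulmx1 -gram_mulV mulmxA mulVmx // mul1mx.
Qed.

Lemma sum_sqr_le_ip_gram (x : 'rV[R]_7) : \sum_i x 0 i ^+ 2 <= ip gram x x.
Proof.
have -> : ip gram x x = sum7 +%R (fun j =>
    sum7 +%R (fun i => x 0 (inord i) * realQ R (gramQ i j)) * x 0 (inord j)).
  rewrite /ip !mxE sum_ord7; apply: eq_sum7 => j; rewrite !mxE sum_ord7.
  by congr (_ * _); apply: eq_sum7 => i; rewrite -gram_coef.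
rewrite sum_ord7 /sum7 /gramQ /cap /= /realQ /realZ /=.
cbv [Pos.to_nat Pos.iter_op Nat.add].
move: (x 0 (inord 0)) (x 0 (inord 1)) (x 0 (inord 2)) (x 0 (inord 3)) (x 0 (inord 4))
  (x 0 (inord 5)) (x 0 (inord 6)) => x0 x1 x2 x3 x4 x5 x6.
have := sqr_ge0 x2; have := sqr_ge0 x3; have := sqr_ge0 (x4 + 63/62 * x5).
have := sqr_ge0 x5; have := sqr_ge0 x6.
nra.
Qed.

Lemma gram_inner_product : is_inner_product gram.
Proof.
split.
  apply/matrixP => i j; rewrite !mxE; apply: realQ_eq.
  exact: (all7P (all7P gram_sym_check (ltn_ord j)) (ltn_ord i)).
move=> x x_neq0; apply: lt_le_trans (sum_sqr_le_ip_gram x).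
have sqr_ge0' (i : 'I_7) : true -> 0 <= x 0 i ^+ 2 by move=> _; exact: sqr_ge0.
rewrite lt_def sumr_ge0 ?andbT //; apply/negP => /eqP /(psumr_eq0P sqr_ge0') x0.
move/negP: x_neq0; apply; apply/eqP/rowP => i; rewrite mxE.
by have /eqP := x0 i isT; rewrite sqrf_eq0 => /eqP.
Qed.

Lemma inord_cap k : @inord 6 (cap k) = inord k.
Proof. by apply: val_inj; rewrite /= !val_inord7 capK. Qed.

Lemma gram_nabla_coef : transported3 (realQ R) connectionQ (nabla_coef n7 gram).
Proof.
move=> a b l; have -> : nabla_coef n7 gram a b l = nabla_coef n7 gram (cap a) (cap b) (cap l).
  by rewrite /nabla_coef /ei !inord_cap.
have half : 2^-1 = realQ R (1 # 2) by rewrite /realQ /realZ /= mulr1z div1r.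
rewrite nabla_coefE invmx_gram half.
rewrite (koszul_coef_morph (realQ_add R) (realQ_mul R) (realQ_opp R) _ _ _ _ n7_struct_coef
  gram_coef gram_inv_coef).
rewrite -(realQ_eq R (all7P (all7P (all7P connection_check (cap_lt7 a)) (cap_lt7 b)) (cap_lt7 l))).
by rewrite /connectionQ !capK.
Qed.

Definition soliton_derivation : 'M[R]_7 :=
  diag_mx (\row_i (realQ R (13 # 16) * (weight i)%:R)).

Lemma n7_ricop_ev i :
  ricop n7 gram (ev R i) = realQ R (-29 # 8) *: ev R i + ev R i *m soliton_derivation.
Proof.
apply/rowP => l; have := ricop_coefE n7 gram i l; rewrite /ei !inord_val => ->.
rewrite invmx_gram (ricop_coef_morph (realQ_add R) (realQ_mul R) (realQ_opp R) _ _
  n7_struct_coef gram_nabla_coef gram_inv_coef).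
rewrite (realQ_eq R (all7P (all7P ricop_check (ltn_ord i)) (ltn_ord l))).
rewrite realQ_mul realQ_add realQ_mul realQ_Z realZ_nat realQ_delta.
rewrite mul_mx_diag !mxE eqxx /=.
by rewrite [l == i]eq_sym; case: eqP => [-> | _] /=; ring.
Qed.

End SevenDimensional.

Theorem mainTheorem11 (R : realType) : einstein_nilradical (@n7 R).
Proof.
split; first exact: n7_is_Lie.
split; first exact: n7_nilpotent.
exists (gram R); split; first exact: gram_inner_product.
apply: (is_nilsoliton_basis (graded_derivation (realQ R (13 # 16)) (@n7_graded R))).
exact: n7_ricop_ev.
Qed.
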